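(* Let $p$ be a prime, $a_1,a_2,a_3\in\mathbb{F}_p$, $s = 3+a_1+a_2+a_3$, and for $k\in\{1,2,3\}$ let $m_k:\mathbb{F}_p^3\to\mathbb{F}_p^3$ replace $x_k$ by $-x_k + s x_{k-1}x_{k+1} - a_{k+1}x_{k-1} - a_{k-1}x_{k+1}$ (indices modulo $3$), leaving the other two coordinates unchanged. If $x,y \in \mathbb{F}_p^3$ and $i \neq j$ satisfy $m_i x = y$ and $m_j x = y$, then $x = y$. *)

From mathcomp Require Import all_boot all_algebra.
Set Implicit Arguments. Unset Strict Implicit. Unset Printing Implicit Defensive.
Import GRing.Theory.
Local Open Scope ring_scope.

(* Coordinates of F_p^3 are indexed by 'I_3 = {0,1,2}; paper index k (1..3)
   corresponds to ordinal k-1. Index arithmetic is modulo 3. *)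
Definition nxt (k : 'I_3) : 'I_3 := inord ((k.+1) %% 3).
Definition prv (k : 'I_3) : 'I_3 := inord ((k + 2) %% 3).

Definition sval3 (p : nat) (a : 'I_3 -> 'F_p) : 'F_p :=
  3%:R + a ord0 + a (inord 1) + a (inord 2).

Definition mk (p : nat) (a : 'I_3 -> 'F_p) (k : 'I_3)
    (x : {ffun 'I_3 -> 'F_p}) : {ffun 'I_3 -> 'F_p} :=
  [ffun j => if j == k then
     - x k + sval3 a * x (prv k) * x (nxt k)
       - a (nxt k) * x (prv k) - a (prv k) * x (nxt k)
   else x j].

(* Each m_k changes only the k-th coordinate, so y agrees with x away from i
   and away from j, hence everywhere. *)
From mathcomp Require Import all_boot all_algebra.
Local Open Scope ring_scope.

Lemma mk_neq (p : nat) (a : 'I_3 -> 'F_p) (k j : 'I_3) (x : {ffun 'I_3 -> 'F_p}) :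
  j != k -> mk a k x j = x j.
Proof. by move=> njk; rewrite ffunE (negbTE njk). Qed.

Lemma ffun_eq_off2 (T : finType) (U : Type) (f g : {ffun T -> U}) (i j : T) :
  i != j -> (forall k, k != i -> g k = f k) -> (forall k, k != j -> g k = f k) ->
  f = g.
Proof.
move=> nij offi offj; apply/ffunP => k.
have [-> | nkj] := eqVneq k j; last by rewrite offj.
by rewrite offi // eq_sym.
Qed.

Theorem proposition1p3 (p : nat) (hp : prime p) (a : 'I_3 -> 'F_p)
    (x y : {ffun 'I_3 -> 'F_p}) (i j : 'I_3) :
  i != j -> mk a i x = y -> mk a j x = y -> x = y.
Proof.
move=> nij mix mjx; apply: (@ffun_eq_off2 _ _ x y i j nij) => k nk.
  by rewrite -mix mk_neq.
by rewrite -mjx mk_neq.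
Qed.
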